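(* For every bisection $\mathcal{S}=(S,\overline{S})$ and every stubborn vertex $x\in S$, it holds that $-a_x\le\mathrm{def}_{\mathcal{S}}(x)\le a_x$.
   Context: $G$ is a finite simple undirected graph with an odd number $n$ of vertices; $d(x)$ is the degree of $x$. Each vertex $x$ has stubbornness $\alpha_x\in(0,1)$ and $a_x=\lfloor\alpha_x/(1-\alpha_x)\rfloor$. A vertex $x$ is stubborn if $a_x\ge\min\{d(x),n-d(x)-1\}$. $W(A,B)$ is the number of edges with one endpoint in $A$ and the other in $B$. A bisection $(S,\overline{S})$ partitions the vertices with $|S|=\frac{n+1}{2}$, $|\overline{S}|=\frac{n-1}{2}$. For $x\in S$, $\mathrm{def}_{\mathcal{S}}(x)=W(x,S)-W(x,\overline{S})$. *)

From mathcomp Require Import all_boot all_order all_algebra.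
Set Implicit Arguments. Unset Strict Implicit. Unset Printing Implicit Defensive.
Import Order.TTheory GRing.Theory Num.Theory.

Definition simple_graph (T : finType) (e : rel T) : Prop :=
  symmetric e /\ irreflexive e.

Definition deg (T : finType) (e : rel T) (x : T) : nat := #|[set y | e x y]|.

Definition W (T : finType) (e : rel T) (x : T) (A : {set T}) : nat :=
  #|[set y in A | e x y]|.

Definition a_of (R : archiRealFieldType) (alpha : R) : int :=
  Num.floor (alpha / (1 - alpha)).

Definition stubborn (R : archiRealFieldType) (T : finType) (e : rel T)
  (alpha : T -> R) (x : T) : Prop :=
  (Num.min (deg e x)%:Z (#|T|%:Z - (deg e x)%:Z - 1) <= a_of (alpha x))%R.

Definition bisection (T : finType) (S : {set T}) : Prop :=
  #|S| = (#|T|.+1)./2.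

Definition deficiency (T : finType) (e : rel T) (S : {set T}) (x : T) : int :=
  ((W e x S)%:Z - (W e x (~: S))%:Z)%R.

From mathcomp Require Import all_boot all_order all_algebra.
From mathcomp Require Import zify.
Import Order.TTheory GRing.Theory Num.Theory.
Set Implicit Arguments. Unset Strict Implicit. Unset Printing Implicit Defensive.
Local Open Scope ring_scope.

(* With n = 2m + 1, the vertex x of S has s <= m neighbours in S (it is not
   its own neighbour) and c <= m neighbours outside S, since |~S| = m.  Hence
   |s - c| is bounded both by the degree s + c and by the number of
   non-neighbours (m - s) + (m - c) = n - 1 - d(x); stubbornness bounds the
   smaller of the two by a_x. *)

Section Neighbourhoods.

Variables (T : finType) (e : rel T).

Lemma deg_split (S : {set T}) (x : T) :
  deg e x = (W e x S + W e x (~: S))%N.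
Proof.
rewrite /deg /W -(cardsID S [set y | e x y]).
by congr (_ + _)%N; apply: eq_card => y; rewrite !inE andbC.
Qed.

Lemma W_le_card (A : {set T}) (x : T) : (W e x A <= #|A|)%N.
Proof. by apply: subset_leq_card; apply/subsetP => y; rewrite inE => /andP[]. Qed.

Lemma W_lt_card (A : {set T}) (x : T) :
  irreflexive e -> x \in A -> (W e x A < #|A|)%N.
Proof.
move=> irr xA; rewrite (cardsD1 x A) xA add1n ltnS.
apply: subset_leq_card; apply/subsetP => y; rewrite !inE => /andP[yA exy].
by rewrite yA andbT; apply: contraTneq exy => ->; rewrite irr.
Qed.

End Neighbourhoods.

Lemma bisection_cards (T : finType) (S : {set T}) :
  odd #|T| -> bisection S ->
  #|S| = (#|T|./2).+1 /\ #|~: S| = #|T|./2.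
Proof.
move=> oddT bis; have := odd_double_half #|T|; rewrite oddT => hT.
have cS : #|S| = (#|T|./2).+1 by rewrite bis -{1}hT /= add0n doubleK.
by split=> //; have := cardsC S; rewrite cS; lia.
Qed.

Lemma distz_le_min_degree_nondegree (m s c : nat) (a : int) :
  (s <= m)%N -> (c <= m)%N ->
  Num.min (s + c)%N%:Z ((2 * m + 1)%N%:Z - (s + c)%N%:Z - 1) <= a ->
  - a <= s%:Z - c%:Z <= a.
Proof. by move=> sm cm; rewrite /Num.min; case: ifP => _; lia. Qed.

Theorem lemma5 (R : archiRealFieldType) (T : finType) (e : rel T)
  (alpha : T -> R) :
  simple_graph e -> odd #|T| ->
  (forall v, 0 < alpha v < 1) ->
  forall (S : {set T}) (x : T),
    bisection S -> x \in S -> stubborn e alpha x ->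
    - a_of (alpha x) <= deficiency e S x <= a_of (alpha x).
Proof.
move=> [_ irr] oddT _ S x bis xS.
have [cS cSc] := bisection_cards oddT bis.
have hT : #|T| = (2 * #|T|./2 + 1)%N.
  by have := odd_double_half #|T|; rewrite oddT -mul2n; lia.
have sm : (W e x S <= #|T|./2)%N by rewrite -ltnS -cS W_lt_card.
have cm : (W e x (~: S) <= #|T|./2)%N by rewrite -cSc W_le_card.
rewrite /stubborn /deficiency (deg_split e S) {1}hT.
exact: distz_le_min_degree_nondegree.
Qed.
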